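(* Let $\boldsymbol\lambda$ be a partition with at most $N$ parts, $d_i=\lambda_i+N-i$, and let $F_{ij}\in\mathcal O_{\boldsymbol\lambda}$ be as defined in the context. Set $F_{00}=1$ and $\chi(\alpha)=\sum_{i=0}^NF_{ii}\prod_{j=0}^{N-i-1}(\alpha-j)$. Then $\chi(\alpha)=\prod_{i=1}^N(\alpha-d_i)$.
   Context: A partition with at most $N$ parts is a sequence of integers $\lambda_1\ge\dots\ge\lambda_N\ge0$; $|\boldsymbol\lambda|=\sum\lambda_i$. Put $d_i=\lambda_i+N-i$ and $P=\{d_1,\dots,d_N\}$. Let $\mathcal O_{\boldsymbol\lambda}=\mathbb C[f_{ij}:1\le i\le N,\ 1\le j\le d_i,\ d_i-j\notin P]$ be the polynomial algebra in the indicated variables (the coordinate ring of the Schubert cell of $N$-dimensional spaces of polynomials whose set of degrees is $P$), and let $f_i(u)=u^{d_i}+\sum_{1\le j\le d_i,\ d_i-j\notin P}f_{ij}u^{d_i-j}$. Let $\operatorname{Wr}(g_1,\dots,g_N)=\det(g_i^{(j-1)})_{i,j=1}^N$ be the Wronskian. For a square matrix $A=(a_{ij})$ with possibly noncommuting entries, $\operatorname{rdet}A=\sum_{\sigma}\operatorname{sgn}(\sigma)a_{1\sigma(1)}a_{2\sigma(2)}\cdots$. Let $\partial=d/du$ and define the differential operator $\mathcal D^{\mathcal O}_{\boldsymbol\lambda}=\frac1{\operatorname{Wr}(f_1,\dots,f_N)}\operatorname{rdet}\begin{pmatrix}f_1&f_1'&\dots&f_1^{(N)}\\ \vdots&&&\vdots\\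 f_N&f_N'&\dots&f_N^{(N)}\\ 1&\partial&\dots&\partial^N\end{pmatrix}=\partial^N+\sum_{i=1}^NF_i(u)\partial^{N-i}$. The top coefficient of $\operatorname{Wr}(f_1,\dots,f_N)$ (a polynomial in $u$ over $\mathcal O_{\boldsymbol\lambda}$) is a nonzero constant, so each $F_i(u)$ expands as $F_i(u)=\sum_{j\ge1}F_{ij}u^{-j}$ with $F_{ij}\in\mathcal O_{\boldsymbol\lambda}$. *)

From HB Require Import structures.
From mathcomp Require Import all_boot all_order all_algebra all_fingroup.
Set Implicit Arguments. Unset Strict Implicit. Unset Printing Implicit Defensive.
Import GRing.Theory.
Local Open Scope ring_scope.

(* Partition lam = (lam_1,...,lam_N), 0-indexed: lam : 'I_N -> nat.
   d_i = lam_i + N - i (1-indexed) becomes, 0-indexed, lam i + (N-1-i). *)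
Definition dseq (N : nat) (lam : 'I_N -> nat) (i : 'I_N) : nat :=
  (lam i + (N.-1 - i))%N.

Definition inP (N : nat) (lam : 'I_N -> nat) (m : nat) : bool :=
  [exists k : 'I_N, dseq lam k == m].

(* f_i(u) = u^{d_i} + sum_{1<=j<=d_i, d_i-j \notin P} f_{ij} u^{d_i-j},
   where the values f i j in R play the role of the generators f_{ij}. *)
Definition fpoly (R : idomainType) (N : nat) (lam : 'I_N -> nat)
    (f : 'I_N -> nat -> R) (i : 'I_N) : {poly R} :=
  'X^(dseq lam i) +
  \sum_(1 <= j < (dseq lam i).+1 | ~~ inP lam (dseq lam i - j)%N)
     (f i j)%:P * 'X^(dseq lam i - j).

Definition wronskian (R : idomainType) (N : nat) (g : 'I_N -> {poly R})
  : {poly R} :=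
  \det (\matrix_(i < N, j < N) (g i)^`(j)).

(* The row-determinant of the (N+1)x(N+1) matrix whose first N rows are
   (g_i, g_i', ..., g_i^{(N)}) and whose last row is (1, d, ..., d^N):
   rdet = sum_s sgn(s) a_{1 s(1)} ... a_{N s(N)} a_{N+1 s(N+1)}
        = sum_s sgn(s) (prod_{i<=N} g_i^{(s(i)-1)}) d^{s(N+1)-1}.
   rdet_coef g k is the (left) coefficient of d^k in this operator. *)
Definition rdet_coef (R : idomainType) (N : nat) (g : 'I_N -> {poly R})
    (k : nat) : {poly R} :=
  \sum_(s : 'S_N.+1 | nat_of_ord (s ord_max) == k)
     (-1) ^+ s * \prod_(i < N) (g i)^`(s (widen_ord (leqnSn N) i)).

(* Coefficient of u^{-j} in the expansion at u = infinity of p(u)/q(u):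
   the constant term of the polynomial part of u^j p / q. *)
Definition laurent_coef (R : idomainType) (p q : {poly R}) (j : nat) : R :=
  ((p * 'X^j) %/ q)`_0.

(* D = (1/Wr) rdet(...) = d^N + sum_i F_i(u) d^{N-i};
   F_i = rdet_coef (N-i) / Wr, and F_{ij} = coefficient of u^{-j} in F_i. *)
Definition Fcoef (R : idomainType) (N : nat) (lam : 'I_N -> nat)
    (f : 'I_N -> nat -> R) (i j : nat) : R :=
  laurent_coef (rdet_coef (fpoly lam f) (N - i)) (wronskian (fpoly lam f)) j.

Definition chi (R : idomainType) (N : nat) (lam : 'I_N -> nat)
    (f : 'I_N -> nat -> R) : {poly R} :=
  \prod_(j < N) ('X - (j%:R)%:P) +
  \sum_(1 <= i < N.+1) (Fcoef lam f i i)%:P * \prod_(j < N - i) ('X - (j%:R)%:P).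

From HB Require Import structures.
From mathcomp Require Import all_boot all_order all_algebra all_fingroup.
From mathcomp Require Import zify.
Set Implicit Arguments. Unset Strict Implicit. Unset Printing Implicit Defensive.
Import GRing.Theory.
Local Open Scope ring_scope.

(* Write c_m for the cofactor of the entry (N, m) in the (N+1) x (N+1) matrix
   whose first N rows are the falling factorials (d_i^_j)_j.  Every term of
   [rdet_coef (fpoly lam f) m] has degree at most
   sum_i d_i - 'C(N+1, 2) + m, and its coefficient in that degree is c_m, so
   the expansion at infinity gives F_ii = c_{N-i} / c_N, where c_N is a
   Vandermonde determinant in the distinct d_i, hence a unit.  Thus
   c_N chi(d_k) = sum_j c_j d_k^_j is the last-row expansion of a determinant
   with two equal rows and vanishes: chi is monic of degree N and vanishes at
   the N distinct points d_1, ..., d_N. *)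

Section LastRowCofactor.
Variables (R : comNzRingType) (N : nat) (G : 'I_N -> nat -> R).

Local Notation widen := (widen_ord (leqnSn N)).

(* [rdet_coef g] is [lastrow_cofactor (fun i j => (g i)^`(j))] by definition. *)
Definition lastrow_cofactor (k : nat) : R :=
  \sum_(s : 'S_N.+1 | nat_of_ord (s ord_max) == k)
     (-1) ^+ s * \prod_(i < N) G i (s (widen i)).

Definition lastrow_mx (v : 'I_N.+1 -> R) : 'M[R]_N.+1 :=
  \matrix_(i, j) (if unlift ord_max i is Some k then G k j else v j).

Lemma unlift_max_widen (i : 'I_N) : unlift ord_max (widen i) = Some i.
Proof.
have -> : widen i = lift ord_max i by apply: val_inj; rewrite [RHS]lift_max.
by rewrite liftK.
Qed.

Lemma det_lastrow_mx v :
  \det (lastrow_mx v) = \sum_(j < N.+1) lastrow_cofactor j * v j.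
Proof.
rewrite /determinant.
transitivity (\sum_(s : 'S_N.+1) \sum_(j < N.+1) (s ord_max == j)%:R *
   ((-1) ^+ s * \prod_(i < N) G i (s (widen i)) * v j)).
  apply: eq_bigr => s _; rewrite [RHS](bigD1 (s ord_max)) //= eqxx mul1r.
  rewrite [X in _ + X]big1 ?addr0 => [|j]; last by rewrite eq_sym => /negPf ->; rewrite mul0r.
  rewrite big_ord_recr /= mulrA; congr (_ * _ * _).
    by apply: eq_bigr => i _; rewrite !mxE unlift_max_widen.
  by rewrite mxE unlift_none.
rewrite exchange_big /=; apply: eq_bigr => j _.
rewrite /lastrow_cofactor big_distrl /= [RHS]big_mkcond /=.
by apply: eq_bigr => s _; rewrite -val_eqE; case: eqP => _; rewrite ?mul1r ?mul0r.
Qed.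

Lemma lastrow_cofactor_orthogonal (k : 'I_N) :
  \sum_(j < N.+1) lastrow_cofactor j * G k j = 0.
Proof.
rewrite -(det_lastrow_mx (G k)).
apply: (@determinant_alternate _ _ _ ord_max (widen k)).
  by rewrite -val_eqE /= neq_ltn ltn_ord orbT.
by move=> j; rewrite !mxE unlift_none unlift_max_widen.
Qed.

Lemma lastrow_cofactorN : lastrow_cofactor N = \det (\matrix_(i < N, j < N) G i j).
Proof.
have := det_lastrow_mx (fun j => (j == ord_max)%:R).
rewrite (bigD1 ord_max) //= eqxx mulr1 big1 ?addr0 => [|j /negPf ->]; last first.
  by rewrite mulr0.
move <-; rewrite (expand_det_row _ ord_max) (bigD1 ord_max) //= big1 ?addr0.
  rewrite !mxE unlift_none eqxx mul1r /cofactor addnn -signr_odd odd_double mul1r.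
  by congr (\det _); apply/matrixP => i j; rewrite !mxE liftK lift_max.
by move=> j /negPf; rewrite !mxE unlift_none => ->; rewrite mul0r.
Qed.

End LastRowCofactor.

Section TopCoefficient.
Variable R : comNzRingType.
Implicit Types (p q : {poly R}) (a b : R).

Definition has_top (E : nat) a p := (size p <= E.+1)%N /\ p`_E = a.

Lemma has_topM m n a b p q :
  has_top m a p -> has_top n b q -> has_top (m + n) (a * b) (p * q).
Proof.
move=> [sp <-] [sq <-]; split; first by apply: leq_trans (size_polyMleq _ _) _; lia.
rewrite coefM (bigD1 (Ordinal (leq_addr n m.+1))) //= addKn big1 ?addr0 // => j.
rewrite -val_eqE /= => /negPf nj; case: (ltngtP j m) nj => // [jm | mj] _.
  by rewrite [q`__]nth_default ?mulr0 //; apply: leq_trans sq _; rewrite ltn_subRL ltn_add2r.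
by rewrite [p`__]nth_default ?mul0r //; apply: leq_trans sp _.
Qed.

Lemma has_top_prod (I : Type) (r : seq I) (E : I -> nat) (a : I -> R)
    (h : I -> {poly R}) :
  (forall i, has_top (E i) (a i) (h i)) ->
  has_top (\sum_(i <- r) E i) (\prod_(i <- r) a i) (\prod_(i <- r) h i).
Proof.
move=> top_h; elim: r => [|x r IHr]; last by rewrite !big_cons; apply: has_topM.
by rewrite !big_nil; split; rewrite ?size_poly1 ?coef1.
Qed.

Lemma has_top_sum (I : Type) (r : seq I) (P : pred I) E (a : I -> R)
    (h : I -> {poly R}) :
  (forall i, P i -> has_top E (a i) (h i)) ->
  has_top E (\sum_(i <- r | P i) a i) (\sum_(i <- r | P i) h i).
Proof.
move=> top_h; apply: (big_ind2 (has_top E)) => //.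
  by split; rewrite ?size_poly0 ?coef0.
move=> a1 p1 a2 p2 [s1 c1] [s2 c2]; split; last by rewrite coefD c1 c2.
by apply: leq_trans (size_polyD _ _) _; rewrite geq_max s1 s2.
Qed.

Lemma has_top_sign E a p (k : bool) :
  has_top E a p -> has_top E ((-1) ^+ k * a) ((-1) ^+ k * p).
Proof.
move=> [sp cp]; rewrite /has_top !mulr_sign.
by case: ifP => _; split; rewrite ?coefN ?size_polyN ?cp.
Qed.

Lemma has_top_derivn_mulXn n a p j :
  has_top n a p -> has_top n (a *+ n ^_ j) (p^`(j) * 'X^j).
Proof.
have coefE m : (p^`(j) * 'X^j)`_m = p`_m *+ m ^_ j.
  rewrite coefMXn; case: ltnP => jm; first by rewrite ffact_small ?mulr0n.
  by rewrite coef_derivn subnKC.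
move=> [sp <-]; split; last exact: coefE.
by apply/leq_sizeP => m /(leq_trans sp) mp; rewrite coefE nth_default ?mul0rn.
Qed.

Lemma sum_perm_ord N (s : 'S_N.+1) :
  (\sum_(i < N) s (widen_ord (leqnSn N) i) + s ord_max)%N = 'C(N.+1, 2).
Proof.
rewrite -bin2_sum big_mkord (reindex_inj (@perm_inj _ s)) /= big_ord_recr /=.
by congr (_ + _)%N; apply: eq_bigr => i _; congr (nat_of_ord (s _)); apply: val_inj.
Qed.

Lemma has_top_lastrow_cofactor_derivn N (g : 'I_N -> {poly R})
    (e : 'I_N -> nat) (c : 'I_N -> R) (m : nat) :
  (forall i, has_top (e i) (c i) (g i)) ->
  has_top (\sum_i e i) (lastrow_cofactor (fun i j => c i *+ e i ^_ j) m)
    (lastrow_cofactor (fun i j => (g i)^`(j)) m * 'X^('C(N.+1, 2) - m)).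
Proof.
move=> top_g; rewrite /lastrow_cofactor big_distrl /=; apply: has_top_sum => s /eqP sm.
rewrite -mulrA; apply: has_top_sign.
rewrite -(sum_perm_ord s) sm addnK -prodrXr -big_split /=.
by apply: has_top_prod => i; apply: has_top_derivn_mulXn.
Qed.

End TopCoefficient.

Lemma coef0_divp_has_top (R : idomainType) (p q : {poly R}) (t E : nat) (a w : R) :
  has_top E a (p * 'X^t) -> has_top E w (q * 'X^t) -> w \is a GRing.unit ->
  (p %/ q)`_0 = a / w.
Proof.
move=> [sp cp] [sq cq] uw.
have w0 : w != 0 by apply: contraTneq uw => ->; rewrite unitr0.
have size_qX : size (q * 'X^t) = E.+1.
  apply/eqP; rewrite eqn_leq sq /= ltnNge; apply: contra w0 => sq'.
  by rewrite -cq nth_default.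
have q0 : q != 0 by apply: contra_eq_neq size_qX => ->; rewrite mul0r size_poly0.
have lead_q : lead_coef q = w.
  by rewrite -cq -[lead_coef q]mulr1 -(lead_coefXn R t) -lead_coefM lead_coefE size_qX.
set r := p - (a / w)%:P * q.
have size_rX : (size (r * 'X^t)%R <= E)%N.
  apply/leq_sizeP => j; rewrite /r mulrBl coefB -mulrA coefCM.
  rewrite leq_eqVlt => /orP [/eqP <- | Ej]; first by rewrite cp cq divrK ?subrr.
  by rewrite !nth_default ?mulr0 ?subr0 //; apply: leq_trans Ej.
have size_r : (size r < size q)%N.
  have [->|r0] := eqVneq r 0; first by rewrite size_poly0 lt0n size_poly_eq0.
  by rewrite -(ltn_add2l t) -!size_mulXn // size_qX ltnS.
have def_p : p = (a / w)%:P * q + r by rewrite /r addrC subrK.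
have unit_lead_q : lead_coef q \is a GRing.unit by rewrite lead_q.
by have [<- _] := Pdiv.IdomainUnit.edivpP unit_lead_q def_p size_r; rewrite coefC.
Qed.

Section FallingFactorialPoly.
Variable R : comNzRingType.

Definition ffpoly (j : nat) : {poly R} := \prod_(t < j) ('X - (t%:R)%:P).

Lemma size_ffpoly j : size (ffpoly j) = j.+1.
Proof. by rewrite size_prod_XsubC -[index_enum _]enumT -cardT card_ord. Qed.

Lemma ffpoly_monic j : ffpoly j \is monic.
Proof. exact: monic_prod_XsubC. Qed.

Lemma horner_ffpoly (x j : nat) : (ffpoly j).[x%:R] = (x ^_ j)%:R.
Proof.
rewrite horner_prod; under eq_bigr do rewrite hornerXsubC.
elim: j => [|j IHj]; first by rewrite big_ord0 ffactn0.
rewrite big_ord_recr /= IHj ffactnSr natrM.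
by case: (leqP j x) => jx; [rewrite natrB | rewrite ffact_small // !mul0r].
Qed.

Lemma det_ffact_mx n (x : 'I_n -> nat) :
  \det (\matrix_(i < n, j < n) ((x i) ^_ j)%:R : 'M[R]_n) =
  \prod_(i < n) \prod_(j < n | (i < j)%N) ((x j)%:R - (x i)%:R).
Proof.
have -> : \matrix_(i < n, j < n) ((x i) ^_ j)%:R =
    (Vandermonde n (\row_i ((x i)%:R : R)))^T *m \matrix_(l < n, j < n) (ffpoly j)`_l.
  apply/matrixP => i j; rewrite !mxE -horner_ffpoly.
  rewrite (@horner_coef_wide _ n); last by rewrite size_ffpoly.
  by apply: eq_bigr => l _; rewrite !mxE mulrC.
rewrite det_mulmx det_tr det_Vandermonde -det_tr det_trig; last first.
  apply/forallP => i; apply/forallP => j; apply/implyP => ij.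
  by rewrite !mxE nth_default // size_ffpoly.
rewrite [X in _ * X]big1 ?mulr1 => [|i _]; last first.
  by rewrite !mxE; have /monicP := ffpoly_monic i; rewrite lead_coefE size_ffpoly.
by apply: eq_bigr => i _; apply: eq_bigr => j _; rewrite !mxE.
Qed.

End FallingFactorialPoly.

Section NatDifferences.
Variable R : unitRingType.
Hypothesis unit_natS : forall n : nat, (n.+1)%:R \is a @GRing.unit R.

Lemma unit_natrB (m n : nat) : m != n -> (m%:R - n%:R : R) \is a GRing.unit.
Proof.
have unit_pos k : (0 < k)%N -> (k%:R : R) \is a GRing.unit.
  by case: k => [|k _]; last exact: unit_natS.
case: (ltngtP m n) => [mn | nm | _]; last by [].
  by move=> _; rewrite -opprB -natrB ?(ltnW mn) // unitrN unit_pos ?subn_gt0.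
by move=> _; rewrite -natrB ?(ltnW nm) // unit_pos ?subn_gt0.
Qed.

Lemma uniq_roots_natr (s : seq nat) : uniq s -> uniq_roots [seq (n%:R : R) | n <- s].
Proof.
elim: s => //= m s IHs /andP [ms /IHs ->]; rewrite andbT all_map.
apply/allP => n ns /=; rewrite /diff_roots -natrM mulnC natrM eqxx unit_natrB //.
by apply: contraNneq ms => <-.
Qed.

End NatDifferences.

Section DecreasingDegrees.
Variables (N : nat) (lam : 'I_N -> nat).
Hypothesis lam_nonincreasing : forall i j : 'I_N, (i <= j)%N -> (lam j <= lam i)%N.

Lemma dseq_decreasing (i j : 'I_N) : (i < j)%N -> (dseq lam j < dseq lam i)%N.
Proof.
by move=> ij; have := lam_nonincreasing (ltnW ij); have := ltn_ord j; rewrite /dseq -subn1; lia.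
Qed.

Lemma dseq_inj : injective (dseq lam).
Proof.
move=> i j dij; apply: val_inj.
by case: (ltngtP i j) => [/dseq_decreasing | /dseq_decreasing | //]; rewrite dij ltnn.
Qed.

End DecreasingDegrees.

Section SchubertCell.
Variables (R : idomainType) (N : nat) (lam : 'I_N -> nat) (f : 'I_N -> nat -> R).

Local Notation d := (dseq lam).
Local Notation g := (fpoly lam f).
Local Notation D := (fun (i : 'I_N) (j : nat) => ((d i) ^_ j)%:R : R).
Local Notation W := (lastrow_cofactor D N).

Lemma fpoly_has_top i : has_top (d i) 1 (g i).
Proof.
rewrite /fpoly; set low := \sum_(_ <= _ < _ | _) _.
have size_low : (size low <= d i)%N.
  apply/leq_sizeP => m dm; rewrite coef_sum big_nat_cond big1 // => j.
  move=> /andP [/andP [j_gt0 j_le] _]; rewrite coefCM coefXn gtn_eqF ?mulr0 //.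
  lia.
split; last by rewrite coefD coefXn eqxx nth_default ?addr0.
by apply: leq_trans (size_polyD _ _) _; rewrite geq_max size_polyXn leqnn (leqW size_low).
Qed.

Lemma has_top_rdet_coef m :
  has_top (\sum_i d i) (lastrow_cofactor D m) (rdet_coef g m * 'X^('C(N.+1, 2) - m)).
Proof. exact: (has_top_lastrow_cofactor_derivn m fpoly_has_top). Qed.

Lemma wronskian_rdet_coef : wronskian g = rdet_coef g N.
Proof. exact: (esym (lastrow_cofactorN (fun i j => (g i)^`(j)))). Qed.

Lemma Fcoef_diag i : (i <= N)%N -> W \is a GRing.unit ->
  Fcoef lam f i i = lastrow_cofactor D (N - i) / W.
Proof.
move=> iN uW; rewrite /Fcoef /laurent_coef wronskian_rdet_coef.
have N_le_C : (N <= 'C(N.+1, 2))%N by rewrite binS bin1 leq_addl.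
apply: (coef0_divp_has_top (t := 'C(N.+1, 2) - N)) uW; last exact: has_top_rdet_coef.
rewrite -mulrA -exprD; have -> : (i + ('C(N.+1, 2) - N) = 'C(N.+1, 2) - (N - i))%N by lia.
exact: has_top_rdet_coef.
Qed.

Lemma chiE : chi lam f =
  ffpoly R N + \sum_(1 <= i < N.+1) (Fcoef lam f i i)%:P * ffpoly R (N - i).
Proof. by []. Qed.

Lemma size_chi_tail :
  (size (\sum_(1 <= i < N.+1) (Fcoef lam f i i)%:P * ffpoly R (N - i))%R <= N)%N.
Proof.
rewrite big_nat_cond; apply: (big_ind (fun p : {poly R} => (size p <= N)%N)).
- by rewrite size_poly0.
- by move=> p q sp sq; apply: leq_trans (size_polyD _ _) _; rewrite geq_max sp sq.
move=> i /andP [/andP [i_gt0 i_le] _]; apply: leq_trans (size_polyMleq _ _) _.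
rewrite size_ffpoly addnS /=; apply: leq_trans (leq_add (size_polyC_leq1 _) (leqnn _)) _; lia.
Qed.

Lemma size_chi : size (chi lam f) = N.+1.
Proof. by rewrite chiE size_polyDl size_ffpoly // ltnS size_chi_tail. Qed.

Lemma chi_monic : chi lam f \is monic.
Proof.
rewrite chiE monicE lead_coefDl ?(monicP (ffpoly_monic R N)) //.
by rewrite size_ffpoly ltnS size_chi_tail.
Qed.

Section Partition.
Hypothesis unit_natS : forall n : nat, (n.+1)%:R \is a @GRing.unit R.
Hypothesis lam_nonincreasing : forall i j : 'I_N, (i <= j)%N -> (lam j <= lam i)%N.

Lemma unit_W : W \is a GRing.unit.
Proof.
rewrite lastrow_cofactorN det_ffact_mx; apply/unitr_prod => i _.
apply/unitr_prod => j ij; apply: (unit_natrB unit_natS).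
by rewrite neq_ltn (dseq_decreasing lam_nonincreasing ij).
Qed.

Lemma root_chi_dseq k : root (chi lam f) (d k)%:R.
Proof.
have W0 : W != 0 by apply: contraTneq unit_W => ->; rewrite unitr0.
apply/rootP/(mulfI W0); rewrite mulr0 -(lastrow_cofactor_orthogonal D k) big_ord_recr /= addrC.
rewrite chiE hornerD horner_ffpoly horner_sum mulrDr mulr_sumr; congr (_ + _).
rewrite big_add1 big_nat_rev /= big_mkord; apply: eq_bigr => i _.
have -> : ((0 + N - i.+1).+1 = N - i)%N by have := ltn_ord i; lia.
rewrite hornerCM horner_ffpoly (Fcoef_diag (leq_subr i N) unit_W) subKn ?(ltnW (ltn_ord i)) //.
by rewrite mulrA [W * _]mulrC divrK ?unit_W.
Qed.

End Partition.
End SchubertCell.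

Unset Implicit Arguments. Set Strict Implicit. Set Printing Implicit Defensive.

Theorem lemma3p3 (R : idomainType) (N : nat) (lam : 'I_N -> nat)
    (f : 'I_N -> nat -> R) :
  (forall n : nat, (n.+1)%:R \is a @GRing.unit R) ->
  (forall i j : 'I_N, (i <= j)%N -> (lam j <= lam i)%N) ->
  chi lam f = \prod_(i < N) ('X - ((dseq lam i)%:R)%:P).
Proof.
move=> unit_natS lam_nonincreasing.
pose rs := [seq (n%:R : R) | n <- [seq dseq lam i | i <- enum 'I_N]].
have size_rs : size rs = N.
  by rewrite /rs !size_map -enumT size_enum_ord.
have uniq_rs : uniq_roots rs.
  apply: (uniq_roots_natr unit_natS).
  by rewrite (map_inj_uniq (dseq_inj lam_nonincreasing)) enum_uniq.
have roots_rs : all (root (chi lam f)) rs.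
  by apply/allP => _ /mapP [_ /mapP [k _ ->] ->]; apply: root_chi_dseq.
have size_chi_rs : size (chi lam f) = (size rs).+1 by rewrite size_chi size_rs.
rewrite (all_roots_prod_XsubC size_chi_rs roots_rs uniq_rs).
by rewrite (monicP (chi_monic lam f)) scale1r /rs big_map big_map big_enum.
Qed.
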